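(* Let $X$ be a complete CAT(0) space, $f:X\to(-\infty,\infty]$ a proper, convex, lower semicontinuous function, $C\subseteq X$ nonempty, and $\psi:[0,\infty)\to[0,\infty)$ an increasing function vanishing only at $0$. Assume $f$ is uniformly convex on $C$ with modulus $\psi$, and let $\gamma>0$ be such that $J_\gamma(C)\subseteq C$. Then $J_\gamma$ is uniformly firmly nonexpansive on $C$ with modulus $2\gamma\psi$.
   Context: A geodesic space $(X,d)$ is CAT(0) if for all $z\in X$, all geodesics $\gamma:[a,b]\to X$ and all $t\in[0,1]$, $d^2(z,\gamma((1-t)a+tb))\le(1-t)d^2(z,\gamma(a))+td^2(z,\gamma(b))-t(1-t)d^2(\gamma(a),\gamma(b))$; $(1-t)x+ty$ denotes the point at distance $t\,d(x,y)$ from $x$ on the unique geodesic from $x$ to $y$. $J_\gamma(x):=\arg\min_{y\in X}\left[f(y)+\frac1{2\gamma}d^2(x,y)\right]$ (exists uniquely). $f$ is uniformly convex on $C$ with modulus $\psi$ if for all $x,y\in C$, $t\in[0,1]$: $f((1-t)x+ty)\le(1-t)f(x)+tf(y)-t(1-t)\psi(d(x,y))$. A map $T$ is uniformly firmly nonexpansive on $C$ with modulus $\varphi$ if $T(C)\subseteq C$ and for all $x,y\in C$, $t\in[0,1]$: $d^2(Tx,Ty)\le d^2((1-t)x+tTx,(1-t)y+tTy)-2(1-t)\varphi(d(Tx,Ty))$. *)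

From Stdlib Require Import Reals.
From Coquelicot Require Import Coquelicot.
Open Scope R_scope.

Definition is_metric {X : Type} (d : X -> X -> R) : Prop :=
  (forall x y, 0 <= d x y) /\
  (forall x y, d x y = 0 <-> x = y) /\
  (forall x y, d x y = d y x) /\
  (forall x y z, d x z <= d x y + d y z).

Definition complete_metric {X : Type} (d : X -> X -> R) : Prop :=
  forall u : nat -> X,
    (forall eps, 0 < eps -> exists N, forall m n, (N <= m)%nat -> (N <= n)%nat ->
        d (u m) (u n) < eps) ->
    exists x, forall eps, 0 < eps -> exists N, forall n, (N <= n)%nat -> d (u n) x < eps.

Definition geodesic {X : Type} (d : X -> X -> R) (g : R -> X) (a b : R) : Prop :=
  a <= b /\
  forall s t, a <= s <= b -> a <= t <= b -> d (g s) (g t) = Rabs (s - t).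

Definition geodesic_space {X : Type} (d : X -> X -> R) : Prop :=
  forall x y, exists g a b, geodesic d g a b /\ g a = x /\ g b = y.

Definition CAT0 {X : Type} (d : X -> X -> R) : Prop :=
  geodesic_space d /\
  forall (z : X) (g : R -> X) (a b t : R), geodesic d g a b -> 0 <= t <= 1 ->
    (d z (g ((1 - t) * a + t * b))) ^ 2 <=
      (1 - t) * (d z (g a)) ^ 2 + t * (d z (g b)) ^ 2
      - t * (1 - t) * (d (g a) (g b)) ^ 2.

(* p = (1-t)x + ty : p is the point at parameter (1-t)a+tb of a geodesic
   g : [a,b] -> X from x to y (geodesics are unique in CAT(0) spaces) *)
Definition geod_point {X : Type} (d : X -> X -> R) (x y : X) (t : R) (p : X) : Prop :=
  exists g a b, geodesic d g a b /\ g a = x /\ g b = y /\ p = g ((1 - t) * a + t * b).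

Definition proper_fun {X : Type} (f : X -> Rbar) : Prop :=
  (forall x, f x <> m_infty) /\ (exists x, f x <> p_infty).

Definition uniformly_convex_on {X : Type} (d : X -> X -> R) (f : X -> Rbar)
    (C : X -> Prop) (psi : R -> R) : Prop :=
  forall x y t p, C x -> C y -> 0 <= t <= 1 -> geod_point d x y t p ->
    Rbar_le (f p)
      (Rbar_minus (Rbar_plus (Rbar_mult (1 - t) (f x)) (Rbar_mult t (f y)))
                  (t * (1 - t) * psi (d x y))).

Definition convex_fun {X : Type} (d : X -> X -> R) (f : X -> Rbar) : Prop :=
  forall x y t p, 0 <= t <= 1 -> geod_point d x y t p ->
    Rbar_le (f p) (Rbar_plus (Rbar_mult (1 - t) (f x)) (Rbar_mult t (f y))).

Definition lsc_fun {X : Type} (d : X -> X -> R) (f : X -> Rbar) : Prop :=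
  forall (alpha : R) (u : nat -> X) (x : X),
    (forall n, Rbar_le (f (u n)) alpha) ->
    Un_cv (fun n => d (u n) x) 0 ->
    Rbar_le (f x) alpha.

(* p = J_gam(x) : p minimizes  y |-> f y + d(x,y)^2 / (2 gam) *)
Definition is_prox {X : Type} (d : X -> X -> R) (f : X -> Rbar) (gam : R) (x p : X) : Prop :=
  forall y, Rbar_le (Rbar_plus (f p) ((d x p) ^ 2 / (2 * gam)))
                    (Rbar_plus (f y) ((d x y) ^ 2 / (2 * gam))).

(* T (given as a relation x |-> Tx) is uniformly firmly nonexpansive on C
   with modulus phi *)
Definition unif_firmly_nonexp_on {X : Type} (d : X -> X -> R) (T : X -> X -> Prop)
    (C : X -> Prop) (phi : R -> R) : Prop :=
  (forall x Tx, C x -> T x Tx -> C Tx) /\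
  forall x y Tx Ty t zx zy, C x -> C y -> T x Tx -> T y Ty -> 0 <= t <= 1 ->
    geod_point d x Tx t zx -> geod_point d y Ty t zy ->
    (d Tx Ty) ^ 2 <= (d zx zy) ^ 2 - 2 * (1 - t) * phi (d Tx Ty).

From Stdlib Require Import Reals Lra Psatz.
From Coquelicot Require Import Coquelicot.
Open Scope R_scope.

(* Write lam = (1 - t) gam.  If p = J_gam x and z = (1 - t) x + t p, then also
   p = J_lam z.  Testing the minimality of p against the points (1 - s) p + s q,
   with the uniform convexity of f and the CAT(0) inequality, and letting s -> 0,
   gives  2 lam (f q - f p - psi d(p,q)) + d(z,q)^2 - d(z,p)^2 - d(p,q)^2 >= 0.
   Adding this to the same inequality with the roles of (x, p) and (y, q)
   exchanged, and bounding the cross terms by the CAT(0) quadrilateral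
   inequality, leaves  d(p,q)^2 <= d(z_x,z_y)^2 - 4 lam psi d(p,q). *)

Lemma Rbar_le_Finite_inv (x : Rbar) (r : R) :
  x <> m_infty -> Rbar_le x r -> exists y, x = Finite y /\ y <= r.
Proof. destruct x as [y| |]; simpl; intros; [eauto | contradiction | congruence]. Qed.

Lemma Rle_0_of_forall_pos_lower_bound (Q B : R) :
  (forall s, 0 < s <= 1 -> 0 <= Q + s * B) -> 0 <= Q.
Proof.
  intros HQB; destruct (Rle_or_lt 0 Q) as [HQ | HQ]; [exact HQ | exfalso].
  assert (Hden : 0 < - Q + Rabs B + 1) by (generalize (Rabs_pos B); lra).
  set (s := - Q / (- Q + Rabs B + 1)).
  assert (Hs0 : 0 < s) by (apply Rdiv_lt_0_compat; lra).
  assert (Hs1 : s <= 1).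
  { apply (Rmult_le_reg_r (- Q + Rabs B + 1)); [lra |].
    unfold s; field_simplify; generalize (Rabs_pos B); lra. }
  assert (HsB : s * B <= s * Rabs B) by (apply Rmult_le_compat_l; [lra | apply Rle_abs]).
  assert (Hval : (Q + s * Rabs B) * (- Q + Rabs B + 1) = Q * (1 - Q))
    by (unfold s; field; lra).
  specialize (HQB s (conj Hs0 Hs1)); nra.
Qed.

Section Geodesics.

Variables (X : Type) (d : X -> X -> R).

Lemma geod_point_dist (x y p : X) (t : R) :
  0 <= t <= 1 -> geod_point d x y t p ->
  d x p = t * d x y /\ d p y = (1 - t) * d x y.
Proof.
  intros Ht [g [a [b [[Hab Hg] [<- [<- ->]]]]]].
  assert (Hin : a <= (1 - t) * a + t * b <= b) by nra.
  rewrite !Hg by lra.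
  rewrite !Rabs_left1 by nra; split; ring.
Qed.

Lemma geod_point_1 (x y p : X) :
  is_metric d -> geod_point d x y 1 p -> p = y.
Proof.
  intros [_ [Hd0 _]] Hp.
  destruct (geod_point_dist x y p 1 ltac:(lra) Hp) as [_ Hpy].
  apply Hd0; lra.
Qed.

Lemma CAT0_geod_point (x y : X) (t : R) :
  CAT0 d -> 0 <= t <= 1 ->
  exists p, geod_point d x y t p /\
    forall z, d z p ^ 2 <= (1 - t) * d z x ^ 2 + t * d z y ^ 2 - t * (1 - t) * d x y ^ 2.
Proof.
  intros [Hgeod Hineq] Ht.
  destruct (Hgeod x y) as [g [a [b [Hg [Hga Hgb]]]]].
  exists (g ((1 - t) * a + t * b)); split.
  - exists g, a, b; auto.
  - intro z; rewrite <- Hga, <- Hgb; exact (Hineq z g a b t Hg Ht).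
Qed.

(* The CAT(0) inequality at the midpoint m of [p, v], seen from u and from q,
   combined with d(u,q) <= d(u,m) + d(m,q). *)
Lemma CAT0_quadrilateral (u v p q : X) :
  is_metric d -> CAT0 d ->
  d u q ^ 2 + d v p ^ 2 <= d u p ^ 2 + d v q ^ 2 + d p q ^ 2 + d u v ^ 2.
Proof.
  intros [Hnn [_ [Hsym Htri]]] Hcat.
  destruct (CAT0_geod_point p v (/ 2) Hcat ltac:(lra)) as [m [_ Hm]].
  assert (Hu := Hm u); assert (Hq := Hm q).
  assert (Huq : d u q <= d u m + d q m) by (rewrite (Hsym q m); apply Htri).
  assert (Huq2 : d u q ^ 2 <= (d u m + d q m) ^ 2)
    by (apply pow_incr; split; [apply Hnn | exact Huq]).
  assert (Hsq : 0 <= (d u m - d q m) ^ 2) by apply pow2_ge_0.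
  rewrite (Hsym v p), (Hsym v q), (Hsym q p) in *.
  nra.
Qed.

End Geodesics.

Section Proximal.

Variables (X : Type) (d : X -> X -> R) (f : X -> Rbar).
Hypothesis Hproper : proper_fun f.

Lemma is_prox_finite (lam : R) (u p : X) :
  is_prox d f lam u p -> exists Fp, f p = Finite Fp.
Proof.
  intro Hp; destruct Hproper as [Hm [y Hy]].
  specialize (Hp y).
  destruct (f p) as [Fp| |] eqn:Efp; [eauto | | exfalso; exact (Hm p Efp)].
  destruct (f y); simpl in Hp; [contradiction | congruence | contradiction].
Qed.

Lemma is_prox_finiteE (lam : R) (u p : X) (Fp : R) :
  0 < lam -> f p = Finite Fp ->
  is_prox d f lam u p <->
  forall w Fw, f w = Finite Fw -> 2 * lam * Fp + d u p ^ 2 <= 2 * lam * Fw + d u w ^ 2.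
Proof.
  intros Hlam Hfp.
  assert (Hscale : forall A B a b,
    A + a / (2 * lam) <= B + b / (2 * lam) <-> 2 * lam * A + a <= 2 * lam * B + b).
  { intros A B a b.
    replace (2 * lam * A + a) with (2 * lam * (A + a / (2 * lam))) by (field; lra).
    replace (2 * lam * B + b) with (2 * lam * (B + b / (2 * lam))) by (field; lra).
    split; intro H; [apply Rmult_le_compat_l | apply (Rmult_le_reg_l (2 * lam))]; lra. }
  split.
  - intros Hp w Fw Hfw; specialize (Hp w).
    rewrite Hfp, Hfw in Hp; apply Hscale; exact Hp.
  - intros Hp w; rewrite Hfp.
    destruct (f w) as [Fw| |] eqn:Efw.
    + apply Hscale, Hp, Efw.
    + exact I.
    + exfalso; exact (proj1 Hproper w Efw).
Qed.

Lemma is_prox_geod_point (gam t : R) (x p z : X) :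
  is_metric d -> 0 < gam -> 0 <= t < 1 ->
  is_prox d f gam x p -> geod_point d x p t z -> is_prox d f ((1 - t) * gam) z p.
Proof.
  intros [Hnn [_ [_ Htri]]] Hgam Ht Hp Hz.
  destruct (is_prox_finite gam x p Hp) as [Fp Hfp].
  destruct (geod_point_dist X d x p z t ltac:(lra) Hz) as [Hxz Hzp].
  apply (is_prox_finiteE _ _ _ Fp); [nra | exact Hfp |].
  intros w Fw Hfw.
  assert (Hmin := proj1 (is_prox_finiteE gam x p Fp Hgam Hfp) Hp w Fw Hfw).
  assert (Hxw : d x w <= t * d x p + d z w) by (rewrite <- Hxz; apply Htri).
  assert (Hxw2 : (1 - t) * d x w ^ 2 <= t * (1 - t) * d x p ^ 2 + d z w ^ 2).
  { assert (d x w ^ 2 <= (t * d x p + d z w) ^ 2)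
      by (apply pow_incr; split; [apply Hnn | exact Hxw]).
    assert (0 <= t * ((1 - t) * d x p - d z w) ^ 2)
      by (apply Rmult_le_pos; [lra | apply pow2_ge_0]).
    nra. }
  assert (Hmin' := Rmult_le_compat_l (1 - t) _ _ ltac:(lra) Hmin).
  rewrite Hzp; nra.
Qed.

Variables (C : X -> Prop) (psi : R -> R).

(* Compare p with w = (1 - s) p + s q, divide by s and let s -> 0. *)
Lemma is_prox_unif_convex_ineq (lam : R) (u p q : X) (Fp Fq : R) :
  CAT0 d -> uniformly_convex_on d f C psi -> 0 < lam -> C p -> C q ->
  is_prox d f lam u p -> f p = Finite Fp -> f q = Finite Fq ->
  0 <= 2 * lam * (Fq - Fp - psi (d p q)) + (d u q ^ 2 - d u p ^ 2 - d p q ^ 2).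
Proof.
  intros Hcat Hucv Hlam Cp Cq Hp Hfp Hfq.
  apply (Rle_0_of_forall_pos_lower_bound _ (2 * lam * psi (d p q) + d p q ^ 2)).
  intros s Hs.
  destruct (CAT0_geod_point X d p q s Hcat ltac:(lra)) as [w [Hw Hcat_w]].
  assert (Hconv := Hucv p q s w Cp Cq ltac:(lra) Hw).
  rewrite Hfp, Hfq in Hconv.
  destruct (Rbar_le_Finite_inv (f w) ((1 - s) * Fp + s * Fq - s * (1 - s) * psi (d p q))
              (proj1 Hproper w) Hconv) as [Fw [Hfw HFw]].
  assert (Hmin := proj1 (is_prox_finiteE lam u p Fp Hlam Hfp) Hp w Fw Hfw).
  assert (HFw' := Rmult_le_compat_l (2 * lam) _ _ ltac:(lra) HFw).
  assert (Hu := Hcat_w u).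
  apply (Rmult_le_reg_l s); [lra |].
  nra.
Qed.

End Proximal.

Theorem proposition4p7 (X : Type) (d : X -> X -> R)
  (Hmet : is_metric d) (Hcat : CAT0 d) (Hcomp : complete_metric d)
  (f : X -> Rbar) (Hprop : proper_fun f) (Hconv : convex_fun d f) (Hlsc : lsc_fun d f)
  (C : X -> Prop) (HCne : exists x, C x)
  (psi : R -> R)
  (Hpsi_nn : forall s, 0 <= s -> 0 <= psi s)
  (Hpsi_mono : forall s t, 0 <= s -> s <= t -> psi s <= psi t)
  (Hpsi_zero : forall s, 0 <= s -> (psi s = 0 <-> s = 0))
  (Hucv : uniformly_convex_on d f C psi)
  (gam : R) (Hgam : 0 < gam)
  (HJC : forall x p, C x -> is_prox d f gam x p -> C p) :
  unif_firmly_nonexp_on d (is_prox d f gam) C (fun s => 2 * gam * psi s).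
Proof.
  split; [exact HJC |].
  intros x y p q t zx zy Cx Cy Hpx Hqy Ht Gx Gy.
  destruct (Req_dec t 1) as [-> | Ht1].
  { rewrite (geod_point_1 X d x p zx Hmet Gx), (geod_point_1 X d y q zy Hmet Gy); lra. }
  assert (Hlam : 0 < (1 - t) * gam) by nra.
  destruct (is_prox_finite X d f Hprop gam x p Hpx) as [Fp Hfp].
  destruct (is_prox_finite X d f Hprop gam y q Hqy) as [Fq Hfq].
  assert (Hzx := is_prox_geod_point X d f Hprop gam t x p zx Hmet Hgam ltac:(lra) Hpx Gx).
  assert (Hzy := is_prox_geod_point X d f Hprop gam t y q zy Hmet Hgam ltac:(lra) Hqy Gy).
  assert (Hp := is_prox_unif_convex_ineq X d f Hprop C psi _ zx p q Fp Fq
                  Hcat Hucv Hlam (HJC x p Cx Hpx) (HJC y q Cy Hqy) Hzx Hfp Hfq).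
  assert (Hq := is_prox_unif_convex_ineq X d f Hprop C psi _ zy q p Fq Fp
                  Hcat Hucv Hlam (HJC y q Cy Hqy) (HJC x p Cx Hpx) Hzy Hfq Hfp).
  assert (Hquad := CAT0_quadrilateral X d zx zy p q Hmet Hcat).
  destruct Hmet as [_ [_ [Hsym _]]].
  rewrite (Hsym q p) in Hq.
  lra.
Qed.
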